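(* Let $(\mathfrak{Q},\&,e)$ be a unital quantale and $p,q\in\mathfrak{Q}$. Then: (1) $\mathcal{D}\mathfrak{Q}(\bot,q)=\mathcal{D}\mathfrak{Q}(q,\bot)=\{\bot\}$; (2) $\mathcal{D}\mathfrak{Q}(e,e)=\mathfrak{Q}$; (3) $q\in\mathcal{D}\mathfrak{Q}(q,q)$; (4) $\bot\in\mathcal{D}\mathfrak{Q}(p,q)$; (5) $e\in\mathcal{D}\mathfrak{Q}(\top,\top)$ if and only if $\mathfrak{Q}$ is integral. Moreover, (6) $\mathfrak{Q}$ is integral if and only if $\mathcal{D}\mathfrak{Q}(p,q)\subseteq\{u\in\mathfrak{Q}\mid u\le p\wedge q\}$ for all $p,q\in\mathfrak{Q}$; (7) $\mathfrak{Q}$ is divisible if and only if $\mathcal{D}\mathfrak{Q}(p,q)=\{u\in\mathfrak{Q}\mid u\le p\wedge q\}$ for all $p,q\in\mathfrak{Q}$.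
   Context: A unital quantale $(\mathfrak{Q},\&,e)$ is a complete lattice $\mathfrak{Q}$ with an associative binary operation $\&$ having unit $e$ and preserving arbitrary joins in each variable separately; throughout it is assumed non-trivial, i.e. $\bot<e$. The left and right implications $/$ and $\backslash$ are defined by $p\& q\le r\iff p\le r/ q\iff q\le p\backslash r$. $\mathfrak{Q}$ is integral if $e=\top$. $\mathfrak{Q}$ is divisible if whenever $u\le q$ one has $q\&(q\backslash u)=u=(u/ q)\& q$. For $p,q\in\mathfrak{Q}$, $\mathcal{D}\mathfrak{Q}(p,q)=\{u\in\mathfrak{Q}\mid (u/ p)\& p=u=q\&(q\backslash u)\}$ (the elements right-divisible by $p$ and left-divisible by $q$). *)

Record quantale := Quantale {
  carrier :> Type;
  le : carrier -> carrier -> Prop;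
  le_refl : forall x, le x x;
  le_trans : forall x y z, le x y -> le y z -> le x z;
  le_antisym : forall x y, le x y -> le y x -> x = y;
  sup : (carrier -> Prop) -> carrier;
  sup_ub : forall (S : carrier -> Prop) x, S x -> le x (sup S);
  sup_least : forall (S : carrier -> Prop) y,
      (forall x, S x -> le x y) -> le (sup S) y;
  mul : carrier -> carrier -> carrier;
  unit : carrier;
  mulA : forall x y z, mul x (mul y z) = mul (mul x y) z;
  mul1q : forall x, mul unit x = x;
  mulq1 : forall x, mul x unit = x;
  mul_supl : forall (S : carrier -> Prop) y,
      mul (sup S) y = sup (fun z => exists x, S x /\ z = mul x y);
  mul_supr : forall (S : carrier -> Prop) x,
      mul x (sup S) = sup (fun z => exists y, S y /\ z = mul x y)
}.

Arguments le {q}.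
Arguments sup {q}.
Arguments mul {q}.
Arguments unit {q}.

Section Ops.
Variable Q : quantale.

Definition bot : Q := sup (fun _ => False).
Definition top : Q := sup (fun _ => True).
Definition meet (p q : Q) : Q := sup (fun u => le u p /\ le u q).

(* left implication  r / q : the largest p with p & q <= r,
   so that p & q <= r <-> p <= r / q *)
Definition rimpl (r q : Q) : Q := sup (fun p => le (mul p q) r).
(* right implication p \ r : the largest q with p & q <= r,
   so that p & q <= r <-> q <= p \ r *)
Definition limpl (p r : Q) : Q := sup (fun q => le (mul p q) r).

Definition nontrivial : Prop := le bot unit /\ bot <> unit.

Definition integral : Prop := unit = top.

Definition divisible : Prop :=
  forall u q : Q, le u q ->
    mul q (limpl q u) = u /\ mul (rimpl u q) q = u.

Definition DQ (p q : Q) (u : Q) : Prop :=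
  mul (rimpl u p) p = u /\ mul q (limpl q u) = u.
End Ops.

Arguments bot {Q}.
Arguments top {Q}.
Arguments meet {Q}.
Arguments rimpl {Q}.
Arguments limpl {Q}.
Arguments DQ {Q}.

(** The whole argument rests on the residuation laws [x & p <= r <-> x <= r / p]
    and [p & x <= r <-> x <= p \ r]: they make [(u / p) & p <= u] and
    [q & (q \ u) <= u] automatic, so membership in [DQ p q] only asks for the
    reverse inequalities.  Multiplication by [bot] gives [bot], and by [e] gives
    the identity, which settles (1)-(4).  In an integral quantale [x & p <= e & p],
    so every element of [DQ p q] lies below [p] and [q]; conversely any
    equation [x & top = e] (or [top & x = e]) forces
    [top = x & top & top <= x & top = e], which yields integrality in (5)-(7). *)

From Stdlib Require Import Setoid.

Section QuantaleTheory.

Variable Q : quantale.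

Lemma bot_le (x : Q) : le bot x.
Proof. apply sup_least. intros y []. Qed.

Lemma le_top (x : Q) : le x top.
Proof. apply (sup_ub Q (fun _ => True)). exact I. Qed.

Lemma le_meet (u p q : Q) : le u (meet p q) <-> le u p /\ le u q.
Proof.
  split.
  - intro Hu. split; apply (le_trans Q _ (meet p q)); try exact Hu;
      apply sup_least; now intros x [Hp Hq].
  - intros Hpq. apply (sup_ub Q (fun v => le v p /\ le v q)). exact Hpq.
Qed.

Lemma integralP : integral Q <-> le (top : Q) unit.
Proof.
  split.
  - intros ->. apply le_refl.
  - intro H. apply le_antisym; [apply le_top | exact H].
Qed.

Lemma sup_pair_of_le (a b : Q) : le a b -> sup (fun x => x = a \/ x = b) = b.
Proof.
  intro Hab. apply le_antisym.
  - apply sup_least. intros x [-> | ->]; [exact Hab | apply le_refl].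
  - apply (sup_ub Q (fun x => x = a \/ x = b)). now right.
Qed.

Lemma mul_le_mono_r (a b c : Q) : le a b -> le (mul a c) (mul b c).
Proof.
  intro Hab. rewrite <- (sup_pair_of_le a b Hab), mul_supl.
  apply (sup_ub Q (fun z => exists x, (x = a \/ x = b) /\ z = mul x c)).
  exists a. now split; [left |].
Qed.

Lemma mul_le_mono_l (a b c : Q) : le a b -> le (mul c a) (mul c b).
Proof.
  intro Hab. rewrite <- (sup_pair_of_le a b Hab), mul_supr.
  apply (sup_ub Q (fun z => exists x, (x = a \/ x = b) /\ z = mul c x)).
  exists a. now split; [left |].
Qed.

Lemma mul_bot_l (x : Q) : mul bot x = bot.
Proof.
  apply le_antisym; [| apply bot_le].
  unfold bot at 1. rewrite mul_supl. apply sup_least. intros z [y [[] _]].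
Qed.

Lemma mul_bot_r (x : Q) : mul x bot = bot.
Proof.
  apply le_antisym; [| apply bot_le].
  unfold bot at 1. rewrite mul_supr. apply sup_least. intros z [y [[] _]].
Qed.

Lemma mul_rimpl_le (r p : Q) : le (mul (rimpl r p) p) r.
Proof. unfold rimpl. rewrite mul_supl. apply sup_least. now intros z [x [H ->]]. Qed.

Lemma mul_limpl_le (p r : Q) : le (mul p (limpl p r)) r.
Proof. unfold limpl. rewrite mul_supr. apply sup_least. now intros z [x [H ->]]. Qed.

Lemma le_rimpl (x r p : Q) : le (mul x p) r <-> le x (rimpl r p).
Proof.
  split.
  - apply (sup_ub Q (fun y => le (mul y p) r)).
  - intro Hx. eapply le_trans; [apply mul_le_mono_r, Hx | apply mul_rimpl_le].
Qed.

Lemma le_limpl (x r p : Q) : le (mul p x) r <-> le x (limpl p r).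
Proof.
  split.
  - apply (sup_ub Q (fun y => le (mul p y) r)).
  - intro Hx. eapply le_trans; [apply mul_le_mono_l, Hx | apply mul_limpl_le].
Qed.

Lemma DQ_intro (p q u : Q) :
  le u (mul (rimpl u p) p) -> le u (mul q (limpl q u)) -> DQ p q u.
Proof.
  intros Hr Hl. split; apply le_antisym; auto using mul_rimpl_le, mul_limpl_le.
Qed.

Lemma DQ_bot (p q : Q) : DQ p q bot.
Proof. apply DQ_intro; apply bot_le. Qed.

Lemma DQ_bot_l (q u : Q) : DQ bot q u <-> u = bot.
Proof.
  split.
  - intros [Hr _]. now rewrite mul_bot_r in Hr.
  - intros ->. apply DQ_bot.
Qed.

Lemma DQ_bot_r (q u : Q) : DQ q bot u <-> u = bot.
Proof.
  split.
  - intros [_ Hl]. now rewrite mul_bot_l in Hl.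
  - intros ->. apply DQ_bot.
Qed.

Lemma DQ_unit (u : Q) : DQ unit unit u.
Proof.
  apply DQ_intro.
  - rewrite mulq1. apply le_rimpl. rewrite mulq1. apply le_refl.
  - rewrite mul1q. apply le_limpl. rewrite mul1q. apply le_refl.
Qed.

Lemma DQ_self (q : Q) : DQ q q q.
Proof.
  apply DQ_intro.
  - rewrite <- (mul1q Q q) at 1. apply mul_le_mono_r, le_rimpl.
    rewrite mul1q. apply le_refl.
  - rewrite <- (mulq1 Q q) at 1. apply mul_le_mono_l, le_limpl.
    rewrite mulq1. apply le_refl.
Qed.

Lemma DQ_le_meet (p q u : Q) : integral Q -> DQ p q u -> le u (meet p q).
Proof.
  intros HI [Hr Hl]. apply le_meet. split.
  - rewrite <- Hr. apply (le_trans Q _ (mul unit p)).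
    + apply mul_le_mono_r. rewrite HI. apply le_top.
    + rewrite mul1q. apply le_refl.
  - rewrite <- Hl. apply (le_trans Q _ (mul q unit)).
    + apply mul_le_mono_l. rewrite HI. apply le_top.
    + rewrite mulq1. apply le_refl.
Qed.

Lemma integral_of_mul_top (x : Q) : mul x top = unit -> integral Q.
Proof.
  intro Hx. apply integralP.
  rewrite <- (mul1q Q top) at 1. rewrite <- Hx at 1. rewrite <- mulA, <- Hx.
  apply mul_le_mono_l, le_top.
Qed.

Lemma integral_of_top_mul (x : Q) : mul top x = unit -> integral Q.
Proof.
  intro Hx. apply integralP.
  rewrite <- (mulq1 Q top) at 1. rewrite <- Hx at 1. rewrite mulA, <- Hx.
  apply mul_le_mono_r, le_top.
Qed.

Lemma integral_DQ_le_meet :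
  integral Q <-> forall p q u : Q, DQ p q u -> le u (meet p q).
Proof.
  split; [intros HI p q u; now apply DQ_le_meet |].
  intro H. apply integralP.
  apply (le_meet top unit unit), H, DQ_unit.
Qed.

Lemma divisible_DQ_meet :
  divisible Q <-> forall p q u : Q, DQ p q u <-> le u (meet p q).
Proof.
  split.
  - intros HD p q u.
    assert (HI : integral Q)
      by exact (integral_of_top_mul _ (proj1 (HD unit top (le_top unit)))).
    split; [now apply DQ_le_meet |].
    intros [Hp Hq]%le_meet.
    split; [apply (HD u p Hp) | apply (HD u q Hq)].
  - intros H u q Hu.
    destruct (proj2 (H q q u) (proj2 (le_meet u q q) (conj Hu Hu))) as [Hr Hl].
    now split.
Qed.

End QuantaleTheory.

Theorem lemma2p1 (Q : quantale) (HQ : nontrivial Q) (p q : Q) :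
  (* (1) *)
  ((forall u : Q, DQ bot q u <-> u = bot) /\
   (forall u : Q, DQ q bot u <-> u = bot)) /\
  (* (2) *)
  (forall u : Q, DQ (unit : Q) unit u) /\
  (* (3) *)
  DQ q q q /\
  (* (4) *)
  DQ p q bot /\
  (* (5) *)
  (DQ (top : Q) top unit <-> integral Q) /\
  (* (6) *)
  (integral Q <-> forall (p' q' u : Q), DQ p' q' u -> le u (meet p' q')) /\
  (* (7) *)
  (divisible Q <-> forall (p' q' u : Q), DQ p' q' u <-> le u (meet p' q')).
Proof.
  clear HQ.
  split; [split; intro u; [apply DQ_bot_l | apply DQ_bot_r] |].
  split; [apply DQ_unit |].
  split; [apply DQ_self |].
  split; [apply DQ_bot |].
  split.
  - split.
    + intros [Hr _]. exact (integral_of_mul_top Q _ Hr).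
    + intros HI. rewrite <- HI. apply DQ_self.
  - split; [apply integral_DQ_le_meet | apply divisible_DQ_meet].
Qed.
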